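(* For every linear-time property $\varphi$ over a finite alphabet $\Sigma$ and every bound $n \in \mathbb{N}$, there is a deterministic safety automaton $\mathcal{A}$ with $O(|\Sigma|^n \cdot 2^{n \log n})$ states such that $L(\mathcal{A})$ is an $n$-lasso-precise underapproximation of $\varphi$, i.e., $L(\mathcal{A}) \subseteq \varphi$ and $L_n(L(\mathcal{A})) = L_n(\varphi)$.
   Context: A linear-time property over $\Sigma$ is a set $\varphi \subseteq \Sigma^\omega$. A lasso of length $n$ is a pair $(u,v)$ with $u\in\Sigma^*$, $v\in\Sigma^+$, $|u\cdot v|=n$, inducing the word $u\cdot v^\omega$. For a property $\psi$, $L_n(\psi)=\{u\cdot v^\omega \in \psi \mid u\in\Sigma^*, v\in\Sigma^+, |u\cdot v|=n\}$. A property $\varphi'$ is an $n$-lasso-precise underapproximation of $\varphi$ if $\varphi'\subseteq\varphi$ and $L_n(\varphi')=L_n(\varphi)$. A nondeterministic parity automaton over $\Sigma$ is $\mathcal{A}=(Q,Q_0,\delta,\mu)$ with finite state set $Q$, initial states $Q_0\subseteq Q$, transition function $\delta: Q\times\Sigma\to\mathcal{P}(Q)$, and coloring $\mu: Q\to C$ for a finite $C\subset\mathbb{N}$. A run on $\alpha_1\alpha_2\cdots$ is a sequence $q_0q_1\cdots$ with $q_0\in Q_0$ and $q_{i+1}\in\delta(q_i,\alpha_{i+1})$; it is accepting if the highest color occurring infinitely often in $\mu(q_0)\mu(q_1)\cdots$ is even; $L(\mathcal{A})$ is the set of words with an accepting run. The automaton is deterministic if $|Q_0|=1$ and $|\delta(q,\alpha)|\le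 1$ for all $q,\alpha$ (missing successors allowed). A safety automaton is one where all states have color $0$, so every infinite run is accepting. The size of an automaton is its number of states. *)

From mathcomp Require Import all_boot.
Set Implicit Arguments. Unset Strict Implicit. Unset Printing Implicit Defensive.

(* Infinite words over Sigma: positions 0,1,2,...  (w 0 is the paper's alpha_1). *)
Definition word (Sigma : Type) := nat -> Sigma.

Definition property (Sigma : Type) := word Sigma -> Prop.

(* The word u . v^omega, where v = a :: v' is nonempty. *)
Definition lasso_word (Sigma : Type) (u : seq Sigma) (a : Sigma) (v' : seq Sigma)
  : word Sigma :=
  fun i => if i < size u then nth a u i
           else nth a (a :: v') ((i - size u) %% size (a :: v')).

Definition Ln (Sigma : Type) (n : nat) (psi : property Sigma) : property Sigma :=
  fun w => psi w /\ exists (u : seq Sigma) (a : Sigma) (v' : seq Sigma),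
      size u + size (a :: v') = n /\ w = lasso_word u a v'.

Definition lasso_precise_under (Sigma : Type) (n : nat) (phi' phi : property Sigma) : Prop :=
  (forall w, phi' w -> phi w) /\ (forall w, Ln n phi' w <-> Ln n phi w).

Record NPA (Sigma : finType) := {
  state : finType;
  init : {set state};
  delta : state -> Sigma -> {set state};
  color : state -> nat
}.
Arguments state {Sigma} _.
Arguments init {Sigma} _.
Arguments delta {Sigma} _ _ _.
Arguments color {Sigma} _ _.

Definition size_aut (Sigma : finType) (A : NPA Sigma) : nat := #|state A|.

Definition is_run (Sigma : finType) (A : NPA Sigma) (w : word Sigma) (r : nat -> state A) : Prop :=
  r 0 \in init A /\ forall i, r i.+1 \in delta A (r i) (w i).

Definition inf_often (Sigma : finType) (A : NPA Sigma) (r : nat -> state A) (c : nat) : Prop :=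
  forall N, exists i, N <= i /\ color A (r i) = c.

Definition accepting_run (Sigma : finType) (A : NPA Sigma) (r : nat -> state A) : Prop :=
  exists c, @inf_often Sigma A r c /\ ~~ odd c /\ (forall c', @inf_often Sigma A r c' -> c' <= c).

Definition lang (Sigma : finType) (A : NPA Sigma) : property Sigma :=
  fun w => exists r, @is_run Sigma A w r /\ @accepting_run Sigma A r.

Definition deterministic (Sigma : finType) (A : NPA Sigma) : Prop :=
  #|init A| = 1 /\ forall q a, #|delta A q a| <= 1.

Definition safety (Sigma : finType) (A : NPA Sigma) : Prop :=
  forall q, color A q = 0.

From mathcomp Require Import all_boot boolp zify.

Set Implicit Arguments. Unset Strict Implicit. Unset Printing Implicit Defensive.

(* If phi contains no lasso of length n, an automaton without transitions will do.
   Otherwise write n = n'+1: a lasso of length n is determined by its first n letters and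
   its loop start k < n. The automaton keeps the last n letters read and the set of loop
   starts still consistent with the input: after n letters, those whose lasso lies in phi;
   afterwards, those for which each new letter repeats the letter n-k positions back. The
   run dies when no candidate is left. If it survives forever, the candidate sets form a
   decreasing chain of nonempty subsets of a finite set, so some k survives forever and the
   input is its lasso, which lies in phi. Conversely the loop start of a lasso in phi is
   never discarded. The states number (n+1) |Sigma|^n 2^n <= 4 |Sigma|^n n^n. *)

Lemma exists_forall_antitone (T : finType) (P : T -> nat -> Prop) :
  (forall t m m', m <= m' -> P t m' -> P t m) ->
  (forall m, exists t, P t m) -> exists t, forall m, P t m.
Proof.
move=> antiP allP; apply: contrapT => /forallNP noneP.
have /choice [bad badP] t : exists m, ~ P t m by apply/existsNP/noneP.
have [t Pt] := allP (\max_t bad t).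
by apply: (badP t); apply: antiP Pt; apply: leq_bigmax.
Qed.

Lemma Sn_mul_exp2_leq N : 0 < N -> N.+1 * 2 ^ N <= 4 * N ^ N.
Proof.
case: N => // N _; elim: N => [|[|N] IH] //.
have le_pow : N.+2 ^ N.+2 <= N.+3 ^ N.+2 by rewrite leq_exp2r.
move: IH le_pow; rewrite (expnS 2 N.+2) (expnS N.+3 N.+2).
move: (2 ^ N.+2) (N.+2 ^ N.+2) (N.+3 ^ N.+2) => X Y Z; nia.
Qed.

Lemma safety_accepting (S : finType) (A : NPA S) (r : nat -> state A) :
  safety A -> accepting_run r.
Proof.
move=> col0; exists 0; split; first by move=> N; exists N.
by split=> // c /(_ 0) [i [_ <-]]; rewrite col0.
Qed.

Lemma lasso_precise_under_of_sub (S : Type) n (phi' phi : property S) :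
  (forall w, phi' w -> phi w) -> (forall w, Ln n phi w -> phi' w) ->
  lasso_precise_under n phi' phi.
Proof.
move=> sub Ln_sub; split=> // w; split.
  by case=> /sub.
by move=> Lw; split; [exact: Ln_sub | case: Lw].
Qed.

Section LassoUnroll.

Variables (S : Type) (n : nat).

(* The lasso word with stem [f 0 .. f (k-1)] and loop [f k .. f n]. *)
Definition lasso_unroll (f : nat -> S) (k : nat) : word S :=
  fun i => if i < k then f i else f (k + (i - k) %% (n.+1 - k)).

Lemma lasso_unroll_ext f g k : k < n.+1 ->
  (forall j, j < n.+1 -> f j = g j) -> lasso_unroll f k = lasso_unroll g k.
Proof.
move=> lt_k eq_fg; apply: funext => i; rewrite /lasso_unroll.
case: ifP => lt_i; first by apply: eq_fg; lia.
apply: eq_fg; have : (i - k) %% (n.+1 - k) < n.+1 - k by apply: ltn_pmod; lia.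
lia.
Qed.

Lemma lasso_unroll_prefix f k i : k < n.+1 -> i < n.+1 -> lasso_unroll f k i = f i.
Proof.
move=> lt_k lt_i; rewrite /lasso_unroll; case: ifP => // ge_i.
by rewrite modn_small; [congr f | ]; lia.
Qed.

Lemma lasso_unroll_periodic f k m : k < n.+1 -> n.+1 <= m ->
  lasso_unroll f k m = lasso_unroll f k (m + k - n.+1).
Proof.
move=> lt_k le_m; rewrite /lasso_unroll !ifF; try lia.
have -> : m - k = (m + k - n.+1 - k) + (n.+1 - k) by lia.
by rewrite modnDr.
Qed.

Lemma lasso_unroll_lasso_word u a v' : size u + size (a :: v') = n.+1 ->
  lasso_unroll (lasso_word u a v') (size u) = lasso_word u a v'.
Proof.
move=> size_uv; apply: funext => i; rewrite /lasso_unroll.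
case: ifP => // lt_i.
have -> : n.+1 - size u = size (a :: v') by lia.
by rewrite /lasso_word lt_i ifF ?addKn ?modn_mod //; lia.
Qed.

End LassoUnroll.

Section LassoAutomaton.

Variables (S : finType) (n : nat) (phi : property S) (d : S).

Definition lstate := ('I_n.+2 * {ffun 'I_n.+1 -> S} * {set 'I_n.+1})%type.

Definition push (h : {ffun 'I_n.+1 -> S}) (a : S) : {ffun 'I_n.+1 -> S} :=
  [ffun i : 'I_n.+1 => if i < n then h (inord i.+1) else a].

(* [h k] is the letter n+1-k positions back, which the loop at [k] says must recur. *)
Definition step_loops (q : lstate) (a : S) : {set 'I_n.+1} :=
  let: (j, h, K) := q in
  if j < n then K
  else if j == n :> nat then
    [set k : 'I_n.+1 | `[< phi (lasso_unroll n (fun i => push h a (inord i)) k) >]]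
  else [set k in K | h k == a].

Definition step_state (q : lstate) (a : S) : lstate :=
  let: (j, h, _) := q in (inord (minn j.+1 n.+1), push h a, step_loops q a).

Definition lasso_delta (q : lstate) (a : S) : {set lstate} :=
  if step_loops q a == set0 then set0 else [set step_state q a].

Definition lasso_aut : NPA S :=
  {| state := lstate;
     init := [set (ord0, [ffun=> d], setT)];
     delta := lasso_delta;
     color := fun=> 0 |}.

Lemma lasso_aut_deterministic : deterministic lasso_aut.
Proof.
split=> [|q a]; first by rewrite cards1.
by rewrite /= /lasso_delta; case: ifP; rewrite ?cards0 ?cards1.
Qed.

Lemma card_lasso_aut : size_aut lasso_aut = n.+2 * (#|S| ^ n.+1 * 2 ^ n.+1).
Proof.
have card_loops : #|{set 'I_n.+1}| = 2 ^ n.+1.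
  by rewrite -cardsT -powersetT card_powerset cardsT card_ord.
by rewrite /size_aut /= !card_prod !card_ord card_ffun card_ord card_loops mulnA.
Qed.

Definition window (w : word S) (m : nat) : {ffun 'I_n.+1 -> S} :=
  [ffun i : 'I_n.+1 => if n.+1 <= m + i then w (m + i - n.+1) else d].

Definition consistent_loop (w : word S) (k m : nat) : Prop :=
  phi (lasso_unroll n w k) /\ forall i, i < m -> w i = lasso_unroll n w k i.

Definition consistent_loops (w : word S) (m : nat) : {set 'I_n.+1} :=
  if m < n.+1 then setT else [set k : 'I_n.+1 | `[< consistent_loop w k m >]].

Definition lasso_state (w : word S) (m : nat) : lstate :=
  (inord (minn m n.+1), window w m, consistent_loops w m).

Lemma push_window w m : push (window w m) (w m) = window w m.+1.
Proof.
apply/ffunP => i; rewrite !ffunE; case: ifP => lt_i.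
  by rewrite inordK ?addnS ?addSn //; lia.
have -> : nat_of_ord i = n by have := ltn_ord i; lia.
by rewrite ifT; [congr w | ]; lia.
Qed.

Lemma window_full w j : j < n.+1 -> window w n.+1 (inord j) = w j.
Proof. by move=> lt_j; rewrite ffunE inordK // ifT; [congr w | ]; lia. Qed.

Lemma consistent_loop_le w k m m' :
  m <= m' -> consistent_loop w k m' -> consistent_loop w k m.
Proof. by move=> le_m [phi_k agree]; split=> // i lt_i; apply: agree; lia. Qed.

Lemma consistent_loopS w k m : k < n.+1 -> n.+1 <= m ->
  consistent_loop w k m.+1 <-> consistent_loop w k m /\ w (m + k - n.+1) = w m.
Proof.
move=> lt_k le_m; split.
  move=> cons; split; first exact: consistent_loop_le cons.
  case: cons => _ agree.
  by rewrite (agree m) // (agree (m + k - n.+1)) -?lasso_unroll_periodic //; lia.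
move=> [[phi_k agree] recur]; split=> // i lt_i.
case: (ltnP i m) => [|ge_i]; first exact: agree.
have -> : i = m by lia.
by rewrite lasso_unroll_periodic // -recur agree //; lia.
Qed.

Lemma consistent_loops_stem w m : m < n.+1 -> consistent_loops w m != set0.
Proof. by move=> lt_m; rewrite /consistent_loops lt_m; apply/set0Pn; exists ord0. Qed.

Lemma step_loops_state w m :
  step_loops (lasso_state w m) (w m) = consistent_loops w m.+1.
Proof.
rewrite /= inordK; last by lia.
case: (ltngtP m n) => [lt_mn|gt_mn|->].
- by rewrite /consistent_loops ifT ?ifT //; lia.
- rewrite /consistent_loops !ifF; try lia.
  apply/setP => k; rewrite !inE ffunE ifT; last by lia.
  apply/andP/asboolP => [[/asboolP cons /eqP recur]|/consistent_loopS [] //].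
    exact/consistent_loopS.
  by move=> cons recur; split; [exact/asboolP | exact/eqP].
- rewrite (minn_idPl (leqnSn n)) eqxx ltnn push_window /consistent_loops ltnn.
  apply/setP => k; rewrite !inE.
  rewrite (@lasso_unroll_ext _ n _ w) //; last exact: window_full.
  apply: asbool_equiv_eq; split=> [phi_k|[] //].
  by split=> // i lt_i; rewrite lasso_unroll_prefix.
Qed.

Lemma lasso_delta_state w m :
  lasso_delta (lasso_state w m) (w m) =
  if consistent_loops w m.+1 == set0 then set0 else [set lasso_state w m.+1].
Proof.
rewrite /lasso_delta step_loops_state; case: ifP => // _.
rewrite /step_state /lasso_state step_loops_state push_window; congr [set (_, _, _)].
by apply: val_inj; rewrite /= !inordK; lia.
Qed.

Lemma lasso_state0 w : lasso_state w 0 = (ord0, [ffun=> d], setT).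
Proof.
congr (_, _, _); first by apply: val_inj; rewrite /= inordK.
by apply/ffunP => i; rewrite !ffunE ifF //; have := ltn_ord i; lia.
Qed.

Lemma lang_lasso_autP w :
  lang lasso_aut w <-> forall m, consistent_loops w m != set0.
Proof.
split.
  case=> r [[r0 rS] _].
  suff run_state m : r m = lasso_state w m /\ consistent_loops w m != set0.
    by move=> m; case: (run_state m).
  elim: m => [|m [rm _]].
    by split; [move: r0; rewrite inE lasso_state0 => /eqP | exact: consistent_loops_stem].
  move: (rS m); rewrite rm /= lasso_delta_state.
  by case: ifP => [_|/negbT alive]; rewrite inE // => /eqP ->.
move=> alive; exists (lasso_state w); split; last exact: safety_accepting.
split=> [|i]; first by rewrite /= lasso_state0 inE.
by rewrite /= lasso_delta_state (negbTE (alive i.+1)) inE.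
Qed.

Lemma phi_of_consistent_loops w : (forall m, consistent_loops w m != set0) -> phi w.
Proof.
move=> alive.
have [k cons] : exists k : 'I_n.+1, forall m, consistent_loop w k m.
  apply: exists_forall_antitone => [k m m'|m]; first exact: consistent_loop_le.
  have /set0Pn [k] := alive (maxn m n.+1).
  rewrite /consistent_loops ifF ?inE; last by lia.
  by move=> /asboolP cons; exists k; apply: consistent_loop_le cons; lia.
have -> : w = lasso_unroll n w k; last by case: (cons 0).
by apply: funext => i; case: (cons i.+1) => _; apply.
Qed.

Lemma Ln_consistent_loops w : Ln n.+1 phi w -> forall m, consistent_loops w m != set0.
Proof.
move=> [phi_w [u [a [v' [size_uv w_lasso]]]]] m; subst w.
have lt_u : size u < n.+1 by move: size_uv => /=; lia.
case: (ltnP m n.+1) => [|ge_m]; first exact: consistent_loops_stem.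
rewrite /consistent_loops ifF; last by lia.
apply/set0Pn; exists (inord (size u)); rewrite inE inordK //; apply/asboolP.
by rewrite /consistent_loop lasso_unroll_lasso_word.
Qed.

Lemma lasso_aut_precise : lasso_precise_under n.+1 (lang lasso_aut) phi.
Proof.
apply: lasso_precise_under_of_sub => w.
  by move/lang_lasso_autP; apply: phi_of_consistent_loops.
by move/Ln_consistent_loops/lang_lasso_autP.
Qed.

Lemma lasso_aut_size : size_aut lasso_aut <= 4 * (#|S| ^ n.+1 * n.+1 ^ n.+1) + 4.
Proof.
rewrite card_lasso_aut; have := Sn_mul_exp2_leq (ltn0Sn n).
by move: (#|S| ^ n.+1) (2 ^ n.+1) (n.+1 ^ n.+1) => s X P; nia.
Qed.

End LassoAutomaton.

Definition empty_aut (S : finType) : NPA S :=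
  {| state := unit; init := setT; delta := fun _ _ => set0; color := fun=> 0 |}.

Lemma empty_aut_deterministic (S : finType) : deterministic (empty_aut S).
Proof. by split=> [|q a]; rewrite ?cardsT ?card_unit ?cards0. Qed.

Lemma lang_empty_aut (S : finType) (w : word S) : ~ lang (empty_aut S) w.
Proof. by case=> r [[_ /(_ 0)]]; rewrite inE. Qed.

Theorem theorem1 :
  exists c : nat,
    forall (Sigma : finType) (phi : property Sigma) (n : nat),
      exists A : NPA Sigma,
        deterministic A /\ safety A /\
        size_aut A <= c * (#|Sigma| ^ n * n ^ n) + c /\
        lasso_precise_under n (lang A) phi.
Proof.
exists 4 => S phi n.
have [Ln_empty|/existsNP [w /contrapT Lw]] := pselect (forall w, ~ Ln n phi w).
  exists (empty_aut S); split; first exact: empty_aut_deterministic.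
  split=> //; split; first by rewrite /size_aut card_unit; lia.
  by apply: lasso_precise_under_of_sub => w; [move/lang_empty_aut | move/Ln_empty].
case: Lw => _ [u [d [v' [<- _]]]].
have -> : size u + size (d :: v') = (size u + size v').+1 by rewrite addnS.
exists (lasso_aut (size u + size v') phi d).
split; first exact: lasso_aut_deterministic.
by split=> //; split; [exact: lasso_aut_size | exact: lasso_aut_precise].
Qed.
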